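(* Let $q^\star(\cdot\mid h)$ and $q_\theta(\cdot\mid h)$ be probability measures on $[0,B]$, and for $x\in[0,B]$ let $P^{\mathrm{obs}}_{h,x}$, $Q^{\mathrm{obs}}_{h,x}$ be their pushforwards under $d\mapsto(\min\{d,x\},\mathbf{1}\{d\le x\})$. Let $\eta\in(0,1]$ and let $\mu(\cdot\mid h)$ be any probability distribution on $[0,B]$ with $\mu(\{B\}\mid h)\ge\eta$. Then $$\mathrm{KL}(q^\star(\cdot\mid h)\|q_\theta(\cdot\mid h))\le\frac1\eta\,\mathbb{E}_{X\sim\mu(\cdot\mid h)}\big[\mathrm{KL}(P^{\mathrm{obs}}_{h,X}\|Q^{\mathrm{obs}}_{h,X})\big].$$
   Context: KL denotes Kullback–Leibler divergence. In the paper $q^\star,q_\theta$ are the true and learned conditional laws of the demand $D_t\in[0,B]$ given history $h$, and $\mu$ is the deployed action distribution. *)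

From HB Require Import structures.
From mathcomp Require Import all_boot all_order all_algebra.
From mathcomp Require Import all_classical all_reals all_analysis.
From mathcomp Require Import measurable_realfun.
Set Implicit Arguments. Unset Strict Implicit. Unset Printing Implicit Defensive.
Import Order.TTheory GRing.Theory Num.Theory.
Local Open Scope classical_set_scope.
Local Open Scope ring_scope.

Definition KL d (T : measurableType d) (R : realType) (P Q : probability T R)
    : \bar R :=
  if `[< P `<< Q >] then
    (\int[P]_x (ln (fine (Radon_Nikodym (charge_of_finite_measure P) Q x)))%:E)%E
  else +oo%E.

Definition obs (R : realType) (x : R) (t : R) : R * bool := (Order.min t x, t <= x).

Lemma measurable_obs (R : realType) (x : R) : measurable_fun setT (@obs R x).
Proof.
apply: measurable_fun_pair.
  exact: (measurable_minr (@measurable_id _ R setT) (measurable_cst x)).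
exact: (measurable_fun_ler (@measurable_id _ R setT) (measurable_cst x)).
Qed.

HB.instance Definition _ (R : realType) (x : R) :=
  isMeasurableFun.Build _ _ _ _ (@obs R x) (measurable_obs x).

Definition obs_law (R : realType) (q : probability R R) (x : R)
    : probability (R * bool)%type R :=
  distribution q (@obs R x).

From HB Require Import structures.
From mathcomp Require Import all_boot all_order all_algebra.
From mathcomp Require Import all_classical all_reals all_analysis.
From mathcomp Require Import measurable_realfun lra.
Import Order.TTheory GRing.Theory Num.Theory.
Set Implicit Arguments. Unset Strict Implicit. Unset Printing Implicit Defensive.
Local Open Scope classical_set_scope.
Local Open Scope ring_scope.

(* Every demand law in play lives on [0, B], where the observation at x = B,
   d |-> (min d B, 1{d <= B}), is just d |-> (d, true).  So it loses nothing:
   P << Q iff their observation laws are, and a density of the observation laws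
   pulled back along [obs B] is a density of P w.r.t. Q.  Hence KL(q* || q_theta)
   is the observation KL at x = B.  Observation KLs are nonnegative (Gibbs), so
   their mu-integral is at least mu{B} >= eta times their value at B. *)

Section ln_inequalities.
Variable R : realType.
Implicit Type y : R.

Lemma subr1_le_mul_ln y : 0 <= y -> y - 1 <= y * ln y.
Proof.
rewrite le0r => /predU1P[->|y0]; first by rewrite mul0r sub0r lerN10.
have : - ln y <= y^-1 - 1.
  by rewrite -lnV ?posrE// -[X in ln X](subrKC 1) le_ln1Dx// ltrBrDl addrN invr_gt0.
move=> /(ler_wpM2l (ltW y0)); rewrite mulrBr mulfV ?gt_eqF// mulr1 mulrN.
lra.
Qed.

Lemma mulr_maxNln_le1 y : 0 <= y -> y * Num.max (- ln y) 0 <= 1.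
Proof.
move=> y0; have := subr1_le_mul_ln y0.
rewrite /Num.max; case: ifPn => _; nra.
Qed.

Lemma addr_mulr_maxNln_le y : 0 <= y ->
  y + y * Num.max (- ln y) 0 <= y * Num.max (ln y) 0 + 1.
Proof.
move=> y0; have := subr1_le_mul_ln y0.
rewrite /Num.max; case: ifPn; case: ifPn => /=; nra.
Qed.

End ln_inequalities.

Section full_sets.
Context d (T : measurableType d) (R : realType) (P : probability T R).
Local Open Scope ereal_scope.

Lemma probability_eq1S (A S : set T) : measurable A -> measurable S ->
  A `<=` S -> P A = 1 -> P S = 1.
Proof.
move=> mA mS AS PA1; apply/le_anti; rewrite probability_le1 //= -{1}PA1.
by apply: le_measure; rewrite ?inE.
Qed.

Lemma probability_setI_eq1 (A S : set T) : measurable A -> measurable S ->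
  P S = 1 -> P (A `&` S) = P A.
Proof.
move=> mA mS PS1.
have PAS0 : P (A `\` S) = 0.
  apply/eqP; rewrite eq_le measure_ge0 andbT.
  have <- : P (~` S) = 0 by rewrite probability_setC // PS1 subee.
  by apply: le_measure; rewrite ?inE //; [exact: measurableD | exact: measurableC].
transitivity (P (A `\` S) + P (A `&` S)); first by rewrite PAS0 add0e.
exact/esym/(measureDI P mA mS).
Qed.

End full_sets.

Section pushforward.
Local Open Scope ereal_scope.

Lemma integral_pushforward_measurable d1 d2 (X : measurableType d1)
    (Y : measurableType d2) (R : realType) (phi : X -> Y)
    (mu : {measure set X -> \bar R}) (f : Y -> \bar R) :
  measurable_fun setT phi -> measurable_fun setT f ->
  \int[pushforward mu phi]_y f y = \int[mu]_x f (phi x).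
Proof.
move=> mphi mf.
have push (g : Y -> \bar R) : measurable_fun setT g -> (forall y, 0 <= g y) ->
    \int[pushforward mu phi]_y g y = \int[mu]_x g (phi x).
  by move=> mg g0; rewrite ge0_integral_pushforward.
rewrite [LHS]integralE [RHS]integralE !push //.
- by congr (_ - _); apply: eq_integral => x _; rewrite !(funeposE, funenegE).
- exact: measurable_funeneg.
- exact: measurable_funepos.
Qed.

End pushforward.

Section rn_density.
Context d (T : measurableType d) (R : realType) (P Q : probability T R).
Local Open Scope ereal_scope.

(* A nonnegative real version of dP/dQ; the derivative in [KL] is a charge
   derivative, only Q-a.e. equal to it. *)
Definition RN_density (x : T) : R := fine (Radon_Nikodym_SigmaFinite.f P Q x).

Hypothesis PQ : P `<< Q.

Lemma RN_densityE x : Radon_Nikodym_SigmaFinite.f P Q x = (RN_density x)%:E.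
Proof. by rewrite /RN_density fineK // Radon_Nikodym_SigmaFinite.f_fin_num. Qed.

Lemma RN_density_ge0 x : (0 <= RN_density x)%R.
Proof. by rewrite -lee_fin -RN_densityE Radon_Nikodym_SigmaFinite.f_ge0. Qed.

Lemma measurable_RN_density : measurable_fun setT RN_density.
Proof.
rewrite /RN_density; apply: measurableT_comp => //.
exact: measurable_int (Radon_Nikodym_SigmaFinite.f_integrable PQ).
Qed.

Lemma RN_density_integral A :
  measurable A -> P A = \int[Q]_(x in A) (RN_density x)%:E.
Proof.
move=> mA; rewrite (Radon_Nikodym_SigmaFinite.f_integral PQ) //.
by apply: eq_integral => x _; rewrite RN_densityE.
Qed.

Lemma ge0_integral_RN_density (F : T -> \bar R) :
  (forall x, 0 <= F x) -> measurable_fun setT F ->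
  \int[P]_x F x = \int[Q]_x (F x * (RN_density x)%:E).
Proof.
move=> F0 mF; rewrite -(Radon_Nikodym_SigmaFinite.change_of_variables PQ) //.
by apply: eq_integral => x _; rewrite RN_densityE.
Qed.

End rn_density.

Section kullback_leibler.
Context d (T : measurableType d) (R : realType).
Implicit Types P Q : probability T R.
Local Open Scope ereal_scope.

Lemma KL_density P Q (h : T -> R) : P `<< Q -> measurable_fun setT h ->
  (forall A, measurable A -> P A = \int[Q]_(x in A) (h x)%:E) ->
  KL P Q = \int[P]_x (ln (h x))%:E.
Proof.
move=> PQ mh hP; rewrite /KL asboolT //.
set g := Radon_Nikodym _ _.
have aeQ : ae_eq Q setT g (fun x => (h x)%:E).
  apply: integral_ae_eq => //; first exact: Radon_Nikodym_integrable.
    exact/measurable_EFinP.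
  by move=> A _ mA; rewrite -hP // -Radon_Nikodym_integral.
apply: ae_eq_integral => //.
- apply/measurable_EFinP; apply: measurableT_comp => //.
  by apply: measurableT_comp => //; exact: measurable_int (Radon_Nikodym_integrable _).
- by apply/measurable_EFinP; apply: measurableT_comp.
- apply: (null_dominates_ae_eq measurableT PQ).
  by apply: filterS aeQ => x /= gx /gx ->.
Qed.

Lemma KL_RN_density P Q :
  P `<< Q -> KL P Q = \int[P]_x (ln (RN_density P Q x))%:E.
Proof.
move=> PQ; apply: KL_density => //.
  exact: measurable_RN_density.
exact: RN_density_integral.
Qed.

(* Gibbs: with g = dP/dQ, g ln g >= g - 1, and the negative part of ln g is
   P-integrable because g (ln g)^- <= 1. *)
Lemma KL_ge0 P Q : 0 <= KL P Q.
Proof.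
have [PQ|nPQ] := pselect (P `<< Q); last by rewrite /KL asboolF.
have g0 := RN_density_ge0 PQ; have mg := measurable_RN_density PQ.
rewrite KL_RN_density //; set g := RN_density P Q in g0 mg *.
have mF : measurable_fun setT (fun x => (ln (g x))%:E).
  by apply/measurable_EFinP; apply: measurableT_comp.
rewrite integralE !(ge0_integral_RN_density PQ) -/g //; last 2 first.
- exact: measurable_funeneg mF.
- exact: measurable_funepos mF.
set F := fun x => (ln (g x))%:E in mF *.
have mgE : measurable_fun setT (fun x => (g x)%:E) by exact/measurable_EFinP.
have mFp : measurable_fun setT (fun x => F^\+ x * (g x)%:E).
  by apply: emeasurable_funM => //; exact: measurable_funepos.
have mFn : measurable_fun setT (fun x => F^\- x * (g x)%:E).
  by apply: emeasurable_funM => //; exact: measurable_funeneg.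
have Fp0 x : 0 <= F^\+ x * (g x)%:E by rewrite mule_ge0 ?lee_fin.
have Fn0 x : 0 <= F^\- x * (g x)%:E by rewrite mule_ge0 ?lee_fin.
set pos := \int[Q]_x _; set neg := \int[Q]_x _.
have cst1 : \int[Q]_x 1 = 1 :> \bar R.
  by rewrite integral_cst // mul1e; exact: probability_setT.
have int_g : \int[Q]_x (g x)%:E = 1.
  by rewrite -RN_density_integral //; exact: probability_setT.
have neg_le1 : neg <= 1.
  rewrite -cst1; apply: ge0_le_integral => // x _.
  by rewrite funenegE -EFin_max -EFinM lee_fin mulrC mulr_maxNln_le1.
have sum_le : 1 + neg <= pos + 1.
  rewrite -{1}int_g -cst1 -!ge0_integralD //; last by move=> x _; rewrite lee_fin.
  apply: ge0_le_integral => //; try exact: emeasurable_funD.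
  - by move=> x _; rewrite adde_ge0 ?lee_fin.
  move=> x _; rewrite funeposE funenegE -!EFin_max -!EFinM -!EFinD lee_fin.
  by rewrite ![(_ * g x)%R]mulrC addr_mulr_maxNln_le.
have neg_fin : neg \is a fin_num.
  by rewrite ge0_fin_numE ?(le_lt_trans neg_le1) ?ltry // integral_ge0.
move: sum_le; rewrite [pos + 1]addeC leeD2lE // => neg_le_pos.
by have -> := suber_ge0 pos neg_fin.
Qed.

End kullback_leibler.

Section integral_atom.
Context d (T : measurableType d) (R : realType) (mu : {measure set T -> \bar R}).
Local Open Scope ereal_scope.
Import HBNNSimple.

(* No measurability of [f] is required, as the integral of a nonnegative
   function is the supremum over the simple functions below it: the map
   x |-> KL (obs_law P x) (obs_law Q x) is not known to be measurable. *)
Lemma ge0_integral_ge_nnsfun (f : T -> \bar R) (h : {nnsfun T >-> R}) :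
  (forall x, 0 <= f x) -> (forall x, (h x)%:E <= f x) ->
  \int[mu]_x (h x)%:E <= \int[mu]_x f x.
Proof.
move=> f0 hf; rewrite [leRHS]ge0_integralTE // [leLHS]integral_nnsfun // patch_setT.
by apply: ereal_sup_ubound; exists h.
Qed.

Lemma ge0_integral_ge_atom (f : T -> \bar R) (a : T) : measurable [set a] ->
  (forall x, 0 <= f x) -> mu [set a] * f a <= \int[mu]_x f x.
Proof.
move=> ma f0.
have lb (c : R) : (0 <= c)%R -> c%:E <= f a -> mu [set a] * c%:E <= \int[mu]_x f x.
  move=> c0 cfa; pose h := scale_nnsfun (indic_nnsfun R ma) c0.
  apply: le_trans (ge0_integral_ge_nnsfun (h := h) f0 _); last first.
    move=> x; rewrite /= mindicE; have [->|xa] := eqVneq x a.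
      by rewrite mem_set // mulr1.
    by rewrite memNset ?mulr0; [exact: f0 | exact/eqP].
  under eq_integral do rewrite /= EFinM mindicE -indicE.
  rewrite ge0_integralZl //; last exact/measurable_EFinP/measurable_indic.
  by rewrite integral_indic // setIT muleC.
move: (f0 a) lb; case: (f a) => [r r0 lb| _ lb|//]; first exact: lb.
have [->|ma0] := eqVneq (mu [set a]) 0; first by rewrite mul0e integral_ge0.
have ma_gt0 : 0 < mu [set a] by rewrite lt0e ma0 measure_ge0.
rewrite gt0_muley // leye_eq; apply/eqP/eqyP => A A0.
move: ma_gt0 lb; case: (mu [set a]) => [m| |] //= m0 lb.
- rewrite lte_fin in m0.
  have := lb (A / m)%R (divr_ge0 (ltW A0) (ltW m0)) (leey _).
  by rewrite -EFinM mulrC divfK ?gt_eqF.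
- have := lb 1%R ler01 (leey _); rewrite gt0_mulye ?lte_fin // leye_eq => /eqP ->.
  exact: leey.
Qed.

End integral_atom.

Section censoring.
Context (R : realType) (B : R).
Implicit Types (P Q : probability R R) (A : set R).
Local Open Scope ereal_scope.

Lemma obs_preimage_censored A :
  obs B @^-1` ((A `&` `]-oo, B]%classic) `*` [set true]) = A `&` `]-oo, B]%classic.
Proof.
apply/seteqP; split => t /=; rewrite /obs /= in_itv /=.
- by move=> [[+ _] tB]; rewrite min_l.
- by case=> At tB; rewrite min_l // in_itv /= tB.
Qed.

Lemma measurable_censored A :
  measurable A -> measurable ((A `&` `]-oo, B]%classic) `*` [set true]).
Proof. by move=> mA; apply: measurableX => //; exact: measurableI. Qed.

Lemma obs_law_censored P A : P `]-oo, B]%classic = 1 -> measurable A ->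
  obs_law P B ((A `&` `]-oo, B]%classic) `*` [set true]) = P A.
Proof.
move=> PB mA; change (P (obs B @^-1` ((A `&` `]-oo, B]%classic) `*` [set true])) = P A).
rewrite obs_preimage_censored.
exact: probability_setI_eq1.
Qed.

Lemma obs_law_dominates P Q x : P `<< Q -> obs_law P x `<< obs_law Q x.
Proof.
exact: (dominates_pushforward (nu := charge_of_finite_measure P) (measurable_obs x)).
Qed.

Lemma obs_law_dominatesW P Q : P `]-oo, B]%classic = 1 -> Q `]-oo, B]%classic = 1 ->
  obs_law P B `<< obs_law Q B -> P `<< Q.
Proof.
move=> PB QB /null_content_dominatesP PQ; apply/null_content_dominatesP => A mA QA.
rewrite -obs_law_censored //; apply: PQ; first exact: measurable_censored.
by rewrite -QA; exact: obs_law_censored.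
Qed.

Lemma obs_law_density P Q (h : R * bool -> R) :
  P `]-oo, B]%classic = 1 -> Q `]-oo, B]%classic = 1 ->
  measurable_fun setT h -> (forall y, (0 <= h y)%R) ->
  (forall C, measurable C -> obs_law P B C = \int[obs_law Q B]_(y in C) (h y)%:E) ->
  forall A, measurable A -> P A = \int[Q]_(x in A) (h (obs B x))%:E.
Proof.
move=> PB QB mh h0 hP A mA.
have mhE : measurable_fun setT (fun y => (h y)%:E) by exact/measurable_EFinP.
transitivity (obs_law P B ((A `&` `]-oo, B]%classic) `*` [set true])).
  by rewrite obs_law_censored.
rewrite hP; last exact: measurable_censored.
rewrite ge0_integral_pushforward //; last 3 first.
- exact: measurable_censored.
- exact: measurable_funTS.
- by move=> y _; rewrite lee_fin.
rewrite obs_preimage_censored.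
rewrite [RHS](ge0_negligible_integral (N := ~` `]-oo, B]%classic)) ?setDE ?setCK //.
- exact: measurableC.
- by apply/measurable_funTS; exact: measurableT_comp mhE (measurable_obs B).
- by move=> x _; rewrite lee_fin.
- by have := probability_setC Q (measurable_itv `]-oo, B]); rewrite QB subee.
Qed.

Lemma KL_obs_law P Q : P `]-oo, B]%classic = 1 -> Q `]-oo, B]%classic = 1 ->
  KL P Q = KL (obs_law P B) (obs_law Q B).
Proof.
move=> PB QB; have [PQ|nPQ] := pselect (P `<< Q); last first.
  by rewrite /KL !asboolF // => /(obs_law_dominatesW PB QB).
have PQ' : obs_law P B `<< obs_law Q B := obs_law_dominates PQ.
set h := RN_density (obs_law P B) (obs_law Q B).
have mh : measurable_fun setT h := measurable_RN_density PQ'.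
rewrite (KL_RN_density PQ') (@KL_density _ _ _ P Q (h \o obs B)) //.
- symmetry; apply: (integral_pushforward_measurable P (measurable_obs B)).
  by apply/measurable_EFinP; apply: measurableT_comp.
- exact: measurableT_comp mh (measurable_obs B).
- apply: obs_law_density => //; first exact: RN_density_ge0.
  exact: RN_density_integral.
Qed.

End censoring.

Unset Implicit Arguments.

Theorem lemmaC19 (R : realType) (B eta : R)
    (qstar qtheta mu : probability R R)
    (hqstar : qstar `[0, B]%classic = 1%E)
    (hqtheta : qtheta `[0, B]%classic = 1%E)
    (hmu : mu `[0, B]%classic = 1%E)
    (heta : 0 < eta <= 1)
    (hmuB : (eta%:E <= mu [set B])%E) :
  (KL qstar qtheta
    <= (eta^-1)%:E * \int[mu]_x KL (obs_law qstar x) (obs_law qtheta x))%E.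
Proof.
have below (P : probability R R) : P `[0, B]%classic = 1%E -> P `]-oo, B]%classic = 1%E.
  by apply: probability_eq1S => // t /=; rewrite !in_itv /= => /andP[_ ->].
have eta0 : 0 < eta by case/andP: heta.
rewrite (KL_obs_law (below _ hqstar) (below _ hqtheta)) lee_pdivlMl //.
apply: le_trans (ge0_integral_ge_atom mu (measurable_set1 B) (fun x => KL_ge0 _ _)).
by apply: lee_wpmul2r => //; exact: KL_ge0.
Qed.
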